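(* Let $(U,<)$ be a linear order and $\bar u=(u_\beta)_{\beta<\alpha}$ a sequence of elements of $U$. Then $\bar u$ is densely non-increasing if and only if for all ordinals $\beta'<\beta<\alpha$ the following two statements hold: (i) if $\beta=\beta'+1$ then $u_{\beta'}\ge u_\beta$; (ii) if $\beta$ is a limit ordinal and $\bar u$ is constant on $[\beta',\beta)$, then $u_{\beta'}\ge u_\beta$.
   Context: A sequence $(u_\beta)_{\beta<\alpha}$ (indexed by a countable ordinal $\alpha$) is constant on $[\gamma,\gamma')$ if $u_\beta=u_\gamma$ for all $\gamma\le\beta<\gamma'$. It is densely non-increasing if for all $\gamma<\gamma'\le\alpha$, either it is constant on $[\gamma,\gamma')$ or there exist $\gamma\le\beta<\beta'<\gamma'$ with $u_\beta>u_{\beta'}$. *)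

From mathcomp Require Import all_boot all_order.
Set Implicit Arguments. Unset Strict Implicit. Unset Printing Implicit Defensive.
Import Order.TTheory.
Local Open Scope order_scope.

(* An ordinal alpha is represented by a well-ordered type I of the ordinals
   beta < alpha; an upper bound gamma' <= alpha is an [option I], with [None]
   standing for alpha itself. *)
Section Defs.
Context {d : Order.disp_t} {I : orderType d} {dU : Order.disp_t} {U : orderType dU}.

Definition lt_bound (b : I) (g' : option I) : Prop :=
  match g' with None => True | Some g => b < g end.

Definition constant_on (u : I -> U) (g : I) (g' : option I) : Prop :=
  forall b : I, g <= b -> lt_bound b g' -> u b = u g.

Definition densely_nonincreasing (u : I -> U) : Prop :=
  forall (g : I) (g' : option I), lt_bound g g' ->
    constant_on u g g' \/
    exists b b' : I, [/\ g <= b, b < b', lt_bound b' g' & u b' < u b].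

Definition is_succ_of (b' b : I) : Prop :=
  b' < b /\ forall c : I, ~ (b' < c /\ c < b).

Definition is_limit (b : I) : Prop :=
  (exists c : I, c < b) /\ ~ (exists b' : I, is_succ_of b' b).
End Defs.

From mathcomp Require Import all_boot all_order.
From Stdlib Require Import Classical.
Set Implicit Arguments. Unset Strict Implicit. Unset Printing Implicit Defensive.
Import Order.TTheory.
Local Open Scope order_scope.

(* Forward: if u is constant on [b', b), test density on the interval [b', b+1);
   a strict descent there must end at b, so u_b < u_b'.
   Backward: if [g, g') contains no strict descent, u is non-decreasing on it,
   and u_b <= u_g follows by well-founded induction on b, using (i) at
   successors and (ii) at limits, where the induction hypothesis provides the
   constancy on [g, b). *)

Section WellOrder.
Context {d : Order.disp_t} {I : orderType d}.
Hypothesis wf : well_founded (fun x y : I => x < y).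

Lemma wf_ex_min (P : I -> Prop) :
  (exists c, P c) -> exists c, P c /\ forall e, P e -> c <= e.
Proof.
move=> [c0 Pc0]; apply: NNPP => nomin.
suff notP : forall c, ~ P c by exact: notP Pc0.
move=> c; elim: (wf c) => {}c _ IH Pc; apply: nomin; exists c; split=> // e Pe.
by rewrite leNgt; apply/negP => ec; exact: IH ec Pe.
Qed.

(* [g'] is the bound b+1: [Some] successor of [b], or [None] (alpha) if [b] is
   the last ordinal. *)
Lemma exists_succ_bound (b : I) :
  exists g' : option I, lt_bound b g' /\ forall c, lt_bound c g' -> c <= b.
Proof.
have [above | no_above] := classic (exists c, b < c).
  have [m [bm m_min]] := wf_ex_min above.
  exists (Some m); split=> // c /= cm.
  by rewrite leNgt; apply/negP => /m_min; rewrite leNgt cm.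
exists None; split=> // c _.
by rewrite leNgt; apply/negP => bc; apply: no_above; exists c.
Qed.

End WellOrder.

Section Bounds.
Context {d : Order.disp_t} {I : orderType d}.

Lemma le_lt_bound (c b : I) (g' : option I) :
  c <= b -> lt_bound b g' -> lt_bound c g'.
Proof. by case: g' => //= m cb; exact: le_lt_trans. Qed.

Lemma lt_succ_le (b' b c : I) : is_succ_of b' b -> c < b -> c <= b'.
Proof.
move=> [_ no_between] cb; rewrite leNgt; apply/negP => b'c.
exact: no_between c (conj b'c cb).
Qed.

End Bounds.

Section Characterization.
Context {d : Order.disp_t} {I : orderType d} {dU : Order.disp_t} {U : orderType dU}.
Variable u : I -> U.

Definition descent_on (g : I) (g' : option I) : Prop :=
  exists b b' : I, [/\ g <= b, b < b', lt_bound b' g' & u b' < u b].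

Lemma succ_constant_on (b' b : I) : is_succ_of b' b -> constant_on u b' (Some b).
Proof.
move=> succ c b'c /= cb; have cb' := lt_succ_le succ cb.
by have -> : c = b' by apply/eqP; rewrite eq_le cb' b'c.
Qed.

Lemma densely_nonincreasing_constant_le (b' b : I) :
  well_founded (fun x y : I => x < y) ->
  densely_nonincreasing u -> b' < b -> constant_on u b' (Some b) -> u b <= u b'.
Proof.
move=> wf dni b'b const.
have [g' [bg' g'_le]] := exists_succ_bound wf b.
case: (dni b' g' (le_lt_bound (ltW b'b) bg')) => [const' | [x [y [b'x xy yg' uyx]]]].
  by rewrite (const' b (ltW b'b) bg').
have ux : u x = u b' := const x b'x (lt_le_trans xy (g'_le y yg')).
have := g'_le y yg'; rewrite le_eqVlt => /predU1P[yb_eq | yb].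
  by move: uyx; rewrite yb_eq ux => /ltW.
have uy : u y = u b' := const y (le_trans b'x (ltW xy)) yb.
by move: uyx; rewrite ux uy ltxx.
Qed.

Section NoDescent.
Hypothesis wf : well_founded (fun x y : I => x < y).
Hypothesis succ_le : forall b' b : I, is_succ_of b' b -> u b <= u b'.
Hypothesis limit_le : forall b' b : I, b' < b ->
  is_limit b -> constant_on u b' (Some b) -> u b <= u b'.

Lemma constant_on_no_descent (g : I) (g' : option I) :
  ~ descent_on g g' -> constant_on u g g'.
Proof.
move=> no_descent.
have u_mono x y : g <= x -> x < y -> lt_bound y g' -> u x <= u y.
  move=> gx xy yg'; rewrite leNgt; apply/negP => uyx.
  by apply: no_descent; exists x, y.
move=> b; elim: (wf b) => {}b _ IH; rewrite le_eqVlt => /predU1P[<- //| gb] bg'.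
apply/eqP; rewrite eq_le [u g <= _]u_mono // andbT.
have [[b' succ] | not_succ] := classic (exists b', is_succ_of b' b).
  have b'b := proj1 succ.
  by rewrite -(IH b' b'b (lt_succ_le succ gb) (le_lt_bound (ltW b'b) bg')) succ_le.
apply: limit_le => //; first by split=> //; exists g.
by move=> c gc /= cb; exact: IH cb gc (le_lt_bound (ltW cb) bg').
Qed.

End NoDescent.

End Characterization.

Theorem mainTheorem6 (d : Order.disp_t) (I : orderType d)
  (wf : well_founded (fun x y : I => x < y))
  (cnt : exists f : I -> nat, injective f)
  (dU : Order.disp_t) (U : orderType dU) (u : I -> U) :
  densely_nonincreasing u <->
  (forall b' b : I, b' < b ->
     (is_succ_of b' b -> u b <= u b') /\
     (is_limit b -> constant_on u b' (Some b) -> u b <= u b')).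
Proof.
split.
  move=> dni b' b b'b; split=> [succ | _].
    exact: densely_nonincreasing_constant_le wf dni b'b (succ_constant_on u succ).
  exact: densely_nonincreasing_constant_le wf dni b'b.
move=> succ_limit_le g g' _.
have [descent | no_descent] := classic (descent_on u g g'); first by right.
left; apply: constant_on_no_descent no_descent => // b' b.
  by move=> succ; exact: (succ_limit_le b' b (proj1 succ)).1 succ.
by move=> b'b; exact: (succ_limit_le b' b b'b).2.
Qed.
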